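(* For each $n\ge1$, $h\in\mathcal H_n$ and $\psi\in C^\alpha_{\mathrm{loc}}(\widehat\Delta)$ we have $(\xi\psi_n)\circ h\in C^\alpha_{\mathrm{loc}}(\Delta)$. More precisely, there exists $C>0$ such that $\|(\xi\psi_n)\circ h\|_\alpha\le C\|\psi\|_\alpha$ for all $\psi\in C^\alpha_{\mathrm{loc}}(\widehat\Delta)$, $h\in\mathcal H_n$ and $n\ge1$.
   Context: $\Delta=[0,1]$, $\alpha\in(0,1]$, $\mathcal P$ countable Lebesgue-mod-0 partition into open intervals, $F:\Delta\to\Delta$ full-branch, $C^{1+\alpha}$ on each element, with inverse branches $\mathcal H,\mathcal H_n$ of $F,F^n$ satisfying $|h'|_\infty\le C_0\rho^n$ ($h\in\mathcal H_n$) and $|\log|h'||_\alpha\le C_0$ ($h\in\mathcal H$), $\rho\in(0,1)$. $\xi$ is the ($\alpha$-Hölder) density of the absolutely continuous $F$-invariant probability $\mu_F$ with respect to Lebesgue. $\Omega\subset\mathbb R^N$ compact Riemannian manifold, $\widehat\Delta=\Delta\times\Omega$ with distance $|x_1-x_2|+|y_1-y_2|$, $\widehat F(x,y)=(F(x),G(x,y))$ with $G$ of class $C^{1+\alpha}$ and $|\widehat F^n(x,y_1)-\widehat F^n(x,y_2)|\le C_0\gamma^n|y_1-y_2|$ ($\gamma\in(0,1)$); write $\widehat F^n(x,y)=(F^n x,G_n(x,y))$. Fix $0\in\Omega$ and set $\psi_n(x)=\psi(\widehat F^n(x,0))$. $C^\alpha_{\mathrm{loc}}(\widehat\Delta)$: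 bounded $\psi$ with $\|\psi\|_\alpha=|\psi|_\infty+\sup_{h\in\mathcal H}\sup\frac{|\psi(hx_1,y_1)-\psi(hx_2,y_2)|}{|x_1-x_2|^\alpha+|y_1-y_2|}<\infty$. $C^\alpha_{\mathrm{loc}}(\Delta)$: bounded $\phi$ with $\|\phi\|_\alpha=|\phi|_\infty+\sup_{h\in\mathcal H}\sup_{x\ne y}|\phi(hx)-\phi(hy)|/|x-y|^\alpha<\infty$. *)

From HB Require Import structures.
From mathcomp Require Import all_boot all_order all_algebra.
From mathcomp Require Import all_classical all_reals all_analysis.
Set Implicit Arguments. Unset Strict Implicit. Unset Printing Implicit Defensive.
Import Order.TTheory GRing.Theory Num.Theory.
Import numFieldNormedType.Exports.
Local Open Scope classical_set_scope.
Local Open Scope ring_scope.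

Section Setting.
Context {R : realType} {N : nat} {I : Type}.

(* Delta = [0,1] and its interior (Delta modulo the null set {0,1}) *)
Definition Delta : set R := [set x | 0 <= x <= 1].
Definition Delta_o : set R := [set x | 0 < x < 1].
Definition oint (p q : R) : set R := [set x | p < x < q].

Definition enorm (y : 'rV[R]_N) : R := Num.sqrt (\sum_(k < N) y ord0 k ^+ 2).

Definition holder_on (A : set R) (a : R) (f : R -> R) (K : R) : Prop :=
  forall x y, A x -> A y -> `|f x - f y| <= K * `|x - y| `^ a.

Definition C1a_interval (a : R) (F : R -> R) (p q : R) : Prop :=
  (forall x, oint p q x -> derivable F x 1) /\
  exists K : R, holder_on (oint p q) a (derive1 F) K.

Definition C1a_on (a : R) (S : set (R * 'rV[R]_N))
    (f : R * 'rV[R]_N -> 'rV[R]_N) : Prop :=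
  exists U : set (R * 'rV[R]_N),
    [/\ open U, S `<=` U, (forall z, U z -> differentiable f z) &
      exists K : R, forall z w v, S z -> S w ->
        `|'d f z v - 'd f w v| <= K * `|z - w| `^ a * `|v| ].

Definition Fhat (F : R -> R) (G : R -> 'rV[R]_N -> 'rV[R]_N)
    (z : R * 'rV[R]_N) : R * 'rV[R]_N := (F z.1, G z.1 z.2).
Definition Fhatn F G (n : nat) (z : R * 'rV[R]_N) := iter n (Fhat F G) z.

Definition dhat (z w : R * 'rV[R]_N) : R := `|z.1 - w.1| + enorm (z.2 - w.2).

Definition psin F G (psi : R * 'rV[R]_N -> R) (n : nat) (x : R) : R :=
  psi (Fhatn F G n (x, 0)).

(* H_n : inverse branches of F^n = compositions of n inverse branches of F *)
Fixpoint Hn (hb : I -> R -> R) (n : nat) : set (R -> R) :=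
  match n with
  | O => [set id]
  | S m => fun g => exists i h, Hn hb m h /\ g = hb i \o h
  end.

Definition normD (a : R) (hb : I -> R -> R) (phi : R -> R) : \bar R :=
  (ereal_sup [set (`|phi x|)%:E | x in Delta_o] +
   ereal_sup [set r | exists i x y, [/\ Delta_o x, Delta_o y, x <> y &
        r = (`|phi (hb i x) - phi (hb i y)| / `|x - y| `^ a)%:E]])%E.

Definition normDhat (a : R) (hb : I -> R -> R) (Om : set 'rV[R]_N)
    (psi : R * 'rV[R]_N -> R) : \bar R :=
  (ereal_sup [set (`|psi z|)%:E | z in [set z | Delta_o z.1 /\ Om z.2]] +
   ereal_sup [set r | exists i x1 x2 y1 y2,
        [/\ Delta_o x1 /\ Delta_o x2, Om y1 /\ Om y2, (x1, y1) <> (x2, y2) &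
        r = (`|psi (hb i x1, y1) - psi (hb i x2, y2)|
               / (`|x1 - x2| `^ a + enorm (y1 - y2)))%:E]])%E.

Definition standing (a : R) (p q : I -> R) (F : R -> R) (hb : I -> R -> R)
    (C0 rho gamma : R) (xi : R -> R) (Om : set 'rV[R]_N)
    (G : R -> 'rV[R]_N -> 'rV[R]_N) : Prop :=
  [/\
   [/\ 0 < a <= 1, 0 < rho < 1 & 0 < gamma < 1],
   [/\ countable [set: I],
       (forall i, 0 <= p i /\ p i < q i /\ q i <= 1),
       (forall i j, i <> j -> oint (p i) (q i) `&` oint (p j) (q j) = set0) &
       lebesgue_measure (Delta `\` \bigcup_i oint (p i) (q i)) = 0%E],
   (* F full branch, C^{1+a} on each element, with inverse branches hb i *)
   [/\ (forall i, C1a_interval a F (p i) (q i)),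
       (forall i x, Delta_o x -> oint (p i) (q i) (hb i x) /\ F (hb i x) = x) &
       (forall i y, oint (p i) (q i) y -> hb i (F y) = y)],
   [/\ (forall n h, Hn hb n h -> forall x, Delta_o x ->
          derivable h x 1 /\ `|derive1 h x| <= C0 * rho ^+ n),
       (forall i, holder_on Delta_o a (fun x => ln `|derive1 (hb i) x|) C0) &
   (* xi: alpha-Hoelder density of the absolutely continuous F-invariant
      probability measure mu_F *)
   [/\ (forall x, Delta x -> 0 <= xi x), measurable_fun Delta xi,
       (\int[lebesgue_measure]_(x in Delta) (xi x)%:E = 1)%E,
       (forall A, measurable A -> A `<=` Delta ->
          (\int[lebesgue_measure]_(x in (\bigcup_i oint (p i) (q i)) `&` F @^-1` A)
              (xi x)%:E =
           \int[lebesgue_measure]_(x in A) (xi x)%:E)%E) &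
       exists K, holder_on Delta a xi K]] &
   ([/\ compact Om, Om 0,
       (forall x y, Delta x -> Om y -> Om (G x y)) &
       C1a_on a [set z | Delta z.1 /\ Om z.2] (fun z => G z.1 z.2)] /\
   (forall n x y1 y2, Delta x -> Om y1 -> Om y2 ->
      dhat (Fhatn F G n (x, y1)) (Fhatn F G n (x, y2))
        <= C0 * gamma ^+ n * enorm (y1 - y2)))].

End Setting.

From mathcomp Require Import all_boot all_order all_algebra.
From mathcomp Require Import all_classical all_reals all_analysis.
From mathcomp Require Import ring lra.
Import Order.TTheory GRing.Theory Num.Theory.
Import numFieldNormedType.Exports.
Local Open Scope classical_set_scope.
Local Open Scope ring_scope.

(* For x in (0,1) and h in H_n we have F^n (h x) = x, so the first coordinate of
   \hat F^n (h x, 0) is x and ((xi psi_n) \o h) x = xi (h x) * psi (x, Y x) with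
   Y x in Omega; this bounds the sup part.  Along a branch, g = h \o hb i lies in
   H_(n+1), so every F^k \o g (k <= n) is C0-Lipschitz.  Telescoping the fibre
   coordinate along the two orbits, with G Lipschitz in the base point and
   \hat F^m contracting fibres by C0 gamma^m, makes Y Lipschitz with a constant
   given by a geometric series, hence independent of n; the Hoelder quotient of
   psi and the Hoelder continuity of xi then bound the Hoelder part. *)

Section RealAnalysis.
Context {R : realType}.

Lemma Delta_o_Delta {x : R} : Delta_o x -> Delta x.
Proof. by rewrite /Delta_o /Delta /= => /andP[x0 x1]; rewrite !ltW. Qed.

Lemma Delta_convex (x y c : R) : Delta x -> Delta y -> x <= c <= y -> Delta c.
Proof. by rewrite /Delta /= => /andP[x0 _] /andP[_ y1] /andP[xc cy]; lra. Qed.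

Lemma Delta_o_convex (x y c : R) :
  Delta_o x -> Delta_o y -> x <= c <= y -> Delta_o c.
Proof. by rewrite /Delta_o /= => /andP[x0 _] /andP[_ y1] /andP[xc cy]; lra. Qed.

Lemma oint_sub_Delta_o {p q : R} : 0 <= p -> q <= 1 -> oint p q `<=` Delta_o.
Proof. by move=> p0 q1 x; rewrite /oint /Delta_o /= => /andP[px xq]; lra. Qed.

Lemma lipschitz_of_derive_bounded (f : R -> R) (A : set R) (M : R) :
  (forall x y c, A x -> A y -> x <= c <= y -> A c) ->
  (forall c, A c -> derivable f c 1 /\ `|'D_1 f c| <= M) ->
  forall x y, A x -> A y -> `|f x - f y| <= M * `|x - y|.
Proof.
move=> A_convex Df.
suff le_xy x y : A x -> A y -> x <= y -> `|f x - f y| <= M * `|x - y|.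
  move=> x y Ax Ay; have [/le_xy|/ltW yx] := leP x y; first exact.
  by rewrite distrC [`|x - y|]distrC; apply: le_xy.
move=> Ax Ay xy.
have A_xy c : c \in `[x, y] -> A c.
  by rewrite in_itv /= => cxy; apply: A_convex Ax Ay _.
have D_xy c : c \in `[x, y] -> derivable f c 1 by move/A_xy/Df => [].
have D_oxy c : c \in `]x, y[ -> is_derive c 1 f ('D_1 f c).
  by move=> cxy; apply/derivableP/D_xy; rewrite in_itv /= !ltW ?(itvP cxy).
rewrite distrC [`|x - y|]distrC.
have [c cxy ->] := MVT_segment xy D_oxy (derivable_within_continuous D_xy).
by rewrite normrM ler_wpM2r // (Df c (A_xy c cxy)).2.
Qed.

Lemma holder_on_Delta_bounded {a K : R} {f : R -> R} :
  0 < a -> holder_on Delta a f K ->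
  exists X : R, forall x, Delta x -> `|f x| <= X.
Proof.
move=> a_gt0 Hf; have D0 : Delta (0 : R) by rewrite /Delta /=; lra.
exists (`|f 0| + `|K|) => x Dx.
rewrite -[f x](subrK (f 0)) addrC (le_trans (ler_normD _ _)) // lerD2l.
apply: le_trans (Hf x 0 Dx D0) _; rewrite subr0.
apply: le_trans (ler_wpM2r (powR_ge0 _ _) (ler_norm K)) _.
rewrite -[leRHS]mulr1 ler_wpM2l //.
apply: (@le_trans _ _ (1 `^ a)); last by rewrite powR1.
apply: (ge0_ler_powR (ltW a_gt0)); rewrite ?nnegrE //.
by move: Dx; rewrite /Delta /= => /andP[x0 x1]; rewrite ger0_norm.
Qed.

End RealAnalysis.

Section RowVectorNorms.
Context {R : realType} {N : nat}.
Implicit Types v : 'rV[R]_N.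

Lemma ler_entry_norm v k : `|v ord0 k| <= `|v|.
Proof.
rewrite [leRHS]/Num.Def.normr /= mx_normrE.
exact: le_trans _ (le_bigmax _ _ (ord0, k)).
Qed.

Lemma norm_le_entries v (c : R) :
  0 <= c -> (forall k, `|v ord0 k| <= c) -> `|v| <= c.
Proof.
move=> c0 vc; rewrite [leLHS]/Num.Def.normr /= mx_normrE.
by rewrite (bigmax_le _ c0) //= => -[i j] _; rewrite (ord1 i).
Qed.

Lemma norm_le_enorm v : `|v| <= enorm v.
Proof.
apply: norm_le_entries => [|k]; first exact: sqrtr_ge0.
rewrite /enorm -sqrtr_sqr ler_sqrt ?sumr_ge0 // => [|i _]; last exact: sqr_ge0.
by rewrite (bigD1 k) //= lerDl sumr_ge0 // => i _; exact: sqr_ge0.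
Qed.

Lemma enorm_le_norm v : enorm v <= Num.sqrt N%:R * `|v|.
Proof.
rewrite /enorm -[`|v|]normr_id -sqrtr_sqr -sqrtrM ?ler0n //.
rewrite ler_sqrt ?mulr_ge0 ?ler0n ?sqr_ge0 //.
rewrite mulr_natl -[X in _ *+ X]card_ord -sumr_const ler_sum // => k _.
rewrite -real_normK ?num_real // lerXn2r ?nnegrE ?ler_entry_norm //.
Qed.

End RowVectorNorms.

Section SliceDerivative.
Context {R : realType} {V W : normedModType R}.

Lemma derive_slice {f : R * V -> W} {c : R} {y : V} :
  differentiable f (c, y) ->
  derivable (fun t => f (t, y)) c 1 /\
  'D_1 (fun t => f (t, y)) c = 'd f (c, y) (1, 0).
Proof.
move=> df; set g := fun t => f (t, y).
have slice_quotient : (fun h : R => h^-1 *: (g (h *: 1 + c) - g c)) =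
    (fun h : R => h^-1 *: (f (h *: ((1, 0) : R * V) + (c, y)) - f (c, y))).
  apply: funext => h; congr (_ *: (f _ - _)).
  by apply/pair_equal_spec; split; rewrite /= ?scaler0 ?add0r.
split; last by rewrite /derive slice_quotient -deriveE.
by have := @diff_derivable _ _ _ f _ (1, 0) df; rewrite /derivable slice_quotient.
Qed.

End SliceDerivative.

Section BaseLipschitz.
Context {R : realType} {N : nat}.

Lemma C1a_on_diff_bounded (v : R * 'rV[R]_N) {a D : R}
    {S : set (R * 'rV[R]_N)} {f : R * 'rV[R]_N -> 'rV[R]_N} {z0 : R * 'rV[R]_N} :
  0 < a -> C1a_on a S f -> S z0 -> (forall z, S z -> `|z - z0| <= D) ->
  exists2 B, 0 <= B & forall z, S z -> `|'d f z v| <= B.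
Proof.
move=> a_gt0 [_ [_ _ _ [K df_holder]]] Sz0 S_le.
have D_ge0 : 0 <= D by apply: le_trans (S_le z0 Sz0); exact: normr_ge0.
exists (`|'d f z0 v| + `|K| * D `^ a * `|v|) => [|z Sz].
  by rewrite addr_ge0 // !mulr_ge0 // powR_ge0.
have := ler_normD ('d f z v - 'd f z0 v) ('d f z0 v).
rewrite subrK addrC => /le_trans; apply; rewrite lerD2l.
apply: le_trans (df_holder z z0 v Sz Sz0) _; rewrite ler_wpM2r //.
apply: le_trans (ler_wpM2r (powR_ge0 _ _) (ler_norm K)) _.
rewrite ler_wpM2l //; apply: (ge0_ler_powR (ltW a_gt0)); rewrite ?nnegrE //.
exact: S_le.
Qed.

Lemma C1a_on_lipschitz_base {a : R} {Om : set 'rV[R]_N}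
    {G : R -> 'rV[R]_N -> 'rV[R]_N} :
  0 < a -> compact Om -> Om 0 ->
  C1a_on a [set z | Delta z.1 /\ Om z.2] (fun z => G z.1 z.2) ->
  exists2 L, 0 <= L & forall u u' y, Delta u -> Delta u' -> Om y ->
    enorm (G u y - G u' y) <= L * `|u - u'|.
Proof.
move=> a_gt0 Om_compact Om0 G_C1a.
have [M [_ Om_le]] := compact_bounded Om_compact.
have S_le (z : R * 'rV[R]_N) : Delta z.1 /\ Om z.2 -> `|z - 0| <= `|M| + 1.
  move=> [Dz1 Omz2]; rewrite subr0 prod_normE /= ge_max; apply/andP; split.
    by case/andP: Dz1 => z0 z1; rewrite ger0_norm // (le_trans z1) // lerDr.
  by apply: (Om_le (`|M| + 1)) Omz2; rewrite (le_lt_trans (ler_norm M)) // ltrDl.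
have [|B B_ge0 dB] := C1a_on_diff_bounded (1, 0) a_gt0 G_C1a _ S_le.
  by split => //=; rewrite /Delta /=; lra.
have [U [_ SU dU _]] := G_C1a.
exists (Num.sqrt N%:R * B); first by rewrite mulr_ge0 ?sqrtr_ge0.
move=> u u' y Du Du' Omy; rewrite -mulrA (le_trans (enorm_le_norm _)) //.
rewrite ler_wpM2l ?sqrtr_ge0 // norm_le_entries ?mulr_ge0 // => k; rewrite !mxE.
apply: (@lipschitz_of_derive_bounded _ (fun t => G t y ord0 k) Delta) => // [|c Dc].
  exact: Delta_convex.
have [dG dG_eq] := derive_slice (dU (c, y) (SU (c, y) (conj Dc Omy))).
move/derivable_mxP: (dG) => /(_ ord0 k) dGk; split => //.
apply: le_trans (dB (c, y) (conj Dc Omy)); rewrite -dG_eq.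
by apply: le_trans (ler_entry_norm _ k); rewrite derive_mx // mxE.
Qed.

End BaseLipschitz.

Lemma sum_geometric_rev_le {R : realType} (g : R) n : 0 < g < 1 ->
  \sum_(k < n) g ^+ (n - k.+1) <= (1 - g)^-1.
Proof.
move=> /andP[g_gt0 g_lt1].
rewrite (reindex_inj rev_ord_inj) /=.
under eq_bigr => k _ do rewrite subnSK // subKn 1?ltnW //.
have := geometric_le_lim n ler01 g_gt0; rewrite (ger0_norm (ltW g_gt0)) => /(_ g_lt1).
by rewrite mul1r seriesEord /=; under eq_bigr do rewrite /geometric /= mul1r.
Qed.

Section SkewProduct.
Context {R : realType} {N : nat}.
Context {F : R -> R} {G : R -> 'rV[R]_N -> 'rV[R]_N} {Om : set 'rV[R]_N}.

Lemma Fhatn_fst n z : (Fhatn F G n z).1 = iter n F z.1.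
Proof. by elim: n => //= n IH; rewrite /Fhatn /= in IH *; rewrite IH. Qed.

Lemma Fhatn_snd_succ n s y :
  (Fhatn F G n.+1 (s, y)).2 = G (iter n F s) (Fhatn F G n (s, y)).2.
Proof. by rewrite /Fhatn iterS /= -[iter n _ _]/(Fhatn F G n _) Fhatn_fst. Qed.

Lemma enorm_snd_le_dhat (z w : R * 'rV[R]_N) : enorm (z.2 - w.2) <= dhat z w.
Proof. by rewrite /dhat lerDr. Qed.

Hypothesis G_Om : forall x y, Delta x -> Om y -> Om (G x y).

Lemma Fhatn_snd_Om n s y : (forall k, (k < n)%N -> Delta (iter k F s)) ->
  Om y -> Om (Fhatn F G n (s, y)).2.
Proof.
elim: n => [//|n IH] Ds Omy; rewrite Fhatn_snd_succ.
by apply: G_Om; [apply: Ds|apply: IH => // k kn; apply: Ds; rewrite ltnS ltnW].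
Qed.

Context {C0 gamma L : R}.
Hypothesis C0_ge0 : 0 <= C0.
Hypothesis gamma01 : 0 < gamma < 1.
Hypothesis L_ge0 : 0 <= L.
Hypothesis G_lipschitz : forall u u' y, Delta u -> Delta u' -> Om y ->
  enorm (G u y - G u' y) <= L * `|u - u'|.
Hypothesis Fhat_contract : forall n x y1 y2, Delta x -> Om y1 -> Om y2 ->
  dhat (Fhatn F G n (x, y1)) (Fhatn F G n (x, y2))
    <= C0 * gamma ^+ n * enorm (y1 - y2).

Lemma Fhatn_snd_dist {n s s' y} {D : R} : Om y ->
  (forall k, (k <= n)%N -> [/\ Delta (iter k F s), Delta (iter k F s') &
     `|iter k F s - iter k F s'| <= D]) ->
  enorm ((Fhatn F G n (s, y)).2 - (Fhatn F G n (s', y)).2)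
    <= Num.sqrt N%:R * (C0 * L * D / (1 - gamma)).
Proof.
move=> Omy close.
have D_ge0 : 0 <= D by have [_ _] := close 0%N isT; apply: le_trans.
pose Y k := (Fhatn F G k (s, y)).2.
have OmY k : (k <= n)%N -> Om (Y k).
  move=> kn; apply: Fhatn_snd_Om => // j jk.
  by have [] := close j (leq_trans (ltnW jk) kn).
(* [Q k]: [k] steps from [(s, y)], then [n - k] steps with base point on the orbit of [s']; [Q n - Q 0] telescopes. *)
pose Q k := (Fhatn F G (n - k) (iter k F s', Y k)).2.
have Q_step k : (k < n)%N -> `|Q k.+1 - Q k| <= C0 * L * D * gamma ^+ (n - k.+1).
  move=> kn; have [Dk Dk' dk] := close k (ltnW kn).
  have [_ Dk1' _] := close k.+1 kn.
  have -> : Q k = (Fhatn F G (n - k.+1)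
      (iter k.+1 F s', G (iter k F s') (Y k))).2.
    by rewrite /Q /Fhatn -(subnSK kn) iterSr.
  rewrite /Q {1}/Y Fhatn_snd_succ (le_trans (norm_le_enorm _)) //.
  have OmYk := OmY k (ltnW kn).
  apply: le_trans (enorm_snd_le_dhat _ _) _.
  apply: le_trans (Fhat_contract _ _ _ _ Dk1' (G_Om _ _ Dk OmYk) (G_Om _ _ Dk' OmYk)) _.
  have G_dist : enorm (G (iter k F s) (Y k) - G (iter k F s') (Y k)) <= L * D.
    exact: le_trans (G_lipschitz _ _ _ Dk Dk' OmYk) (ler_wpM2l L_ge0 dk).
  rewrite (_ : C0 * L * D * _ = C0 * gamma ^+ (n - k.+1) * (L * D)); last by ring.
  by rewrite ler_wpM2l // mulr_ge0 // exprn_ge0 // ltW; case/andP: gamma01.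
have telescope : (Fhatn F G n (s, y)).2 - (Fhatn F G n (s', y)).2 =
    \sum_(k < n) (Q k.+1 - Q k).
  by rewrite -(big_mkord xpredT (fun k => Q k.+1 - Q k)) telescope_sumr // /Q subnn subn0.
rewrite (le_trans (enorm_le_norm _)) // ler_wpM2l ?sqrtr_ge0 // telescope.
apply: le_trans (ler_norm_sum _ _ _) _.
apply: le_trans (ler_sum _ (fun (k : 'I_n) _ => Q_step k (ltn_ord k))) _.
rewrite -mulr_sumr ler_wpM2l ?mulr_ge0 //; exact: sum_geometric_rev_le.
Qed.

End SkewProduct.

Section Seminorms.
Context {R : realType} {N : nat} {I : Type}.
Variables (a : R) (hb : I -> R -> R) (Om : set 'rV[R]_N).

Definition hat_sup_le (psi : R * 'rV[R]_N -> R) (s : R) : Prop :=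
  forall z, Delta_o z.1 -> Om z.2 -> `|psi z| <= s.

Definition hat_holder_le (psi : R * 'rV[R]_N -> R) (t : R) : Prop :=
  forall i x1 x2 y1 y2, Delta_o x1 -> Delta_o x2 -> Om y1 -> Om y2 ->
    (x1, y1) <> (x2, y2) ->
    `|psi (hb i x1, y1) - psi (hb i x2, y2)|
      / (`|x1 - x2| `^ a + enorm (y1 - y2)) <= t.

Lemma normD_le (phi : R -> R) (b b' : R) :
  (forall x, Delta_o x -> `|phi x| <= b) ->
  (forall i x y, Delta_o x -> Delta_o y -> x <> y ->
     `|phi (hb i x) - phi (hb i y)| / `|x - y| `^ a <= b') ->
  (normD a hb phi <= (b + b')%:E)%E.
Proof.
move=> phi_le phi_holder; rewrite EFinD; apply: leeD.
  by apply: ge_ereal_sup => _ [x Dx <-]; rewrite lee_fin phi_le.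
by apply: ge_ereal_sup => _ [i [x [y [Dx Dy xy ->]]]]; rewrite lee_fin phi_holder.
Qed.

Lemma normD_eqNy (phi : R -> R) : ~ inhabited I -> normD a hb phi = -oo%E.
Proof.
move=> noI; rewrite /normD (_ : [set r | _] = set0) ?ereal_sup0 ?addeNy //.
by apply/seteqP; split => // r [i _]; case: noI.
Qed.

Lemma normDhat_fin_decomp (psi : R * 'rV[R]_N -> R) (i0 : I) : Om 0 ->
  (normDhat a hb Om psi < +oo)%E ->
  exists s t, [/\ 0 <= s, 0 <= t, normDhat a hb Om psi = (s + t)%:E,
    hat_sup_le psi s & hat_holder_le psi t].
Proof.
have D_half : Delta_o (2^-1 : R) by rewrite /Delta_o /=; lra.
have D_quarter : Delta_o (4^-1 : R) by rewrite /Delta_o /=; lra.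
have quarter_lt_half : (4^-1 : R) < 2^-1 by lra.
move=> Om0; rewrite /normDhat.
set S1 := ereal_sup _; set S2 := ereal_sup _ => fin_sum.
have S1_ge0 : (0 <= S1)%E.
  apply: le_trans (ereal_sup_ubound _); last by exists (2^-1, 0).
  by rewrite lee_fin.
have S2_ge0 : (0 <= S2)%E.
  pose q : R := `|psi (hb i0 2^-1, 0) - psi (hb i0 4^-1, 0)|
    / (`|2^-1 - 4^-1| `^ a + enorm (0 - 0 : 'rV[R]_N)).
  apply: (@le_trans _ _ q%:E).
    by rewrite lee_fin divr_ge0 // addr_ge0 ?powR_ge0 ?sqrtr_ge0.
  apply: ereal_sup_ubound; exists i0, 2^-1, 4^-1, 0, 0; split => //.
  by move=> [/eqP]; rewrite gt_eqF.
have S1_fin : (S1 < +oo)%E by apply: le_lt_trans fin_sum; exact: leeDl.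
have S2_fin : (S2 < +oo)%E by apply: le_lt_trans fin_sum; exact: leeDr.
have S1E : S1 = (fine S1)%:E by rewrite fineK // ge0_fin_numE.
have S2E : S2 = (fine S2)%:E by rewrite fineK // ge0_fin_numE.
exists (fine S1), (fine S2); split.
- by rewrite -lee_fin -S1E.
- by rewrite -lee_fin -S2E.
- by rewrite S1E S2E.
- by move=> z Dz1 Omz2; rewrite -lee_fin -S1E; apply: ereal_sup_ubound; exists z.
- move=> i x1 x2 y1 y2 Dx1 Dx2 Omy1 Omy2 ne; rewrite -lee_fin -S2E.
  by apply: ereal_sup_ubound; exists i, x1, x2, y1, y2.
Qed.

End Seminorms.

Section Transfer.
Context {R : realType} {N : nat} {I : Type} {F : R -> R} {hb : I -> R -> R}.
Hypothesis hb_Delta_o : forall i x, Delta_o x -> Delta_o (hb i x).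
Hypothesis hbK : forall i x, Delta_o x -> F (hb i x) = x.

Lemma Hn_Delta_o {n h} : Hn hb n h -> forall x, Delta_o x -> Delta_o (h x).
Proof.
elim: n h => [h -> //|n IH h [i [g [Hg ->]]] x Dx].
exact/hb_Delta_o/IH.
Qed.

Lemma Hn_comp {n h} i : Hn hb n h -> Hn hb n.+1 (h \o hb i).
Proof.
elim: n h => [h ->|n IH h [j [g [Hg ->]]]]; first by exists i, id.
by exists j, (g \o hb i); split => //; apply: IH.
Qed.

Lemma iter_Hn {n h} k : Hn hb n h -> (k <= n)%N ->
  exists2 g, Hn hb (n - k) g & forall x, Delta_o x -> iter k F (h x) = g x.
Proof.
elim: n h k => [h k Hh|n IH h [|k] Hh kn]; first by rewrite leqn0 => /eqP ->; exists h.
  by exists h; rewrite ?subn0.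
have [i [g [Hg ->]]] := Hh.
have [g' Hg' iter_g] := IH g k Hg kn.
exists g' => // x Dx.
by rewrite iterSr /= hbK ?iter_g //; exact: Hn_Delta_o Hg _ Dx.
Qed.

Lemma iter_HnK {n h x} : Hn hb n h -> Delta_o x -> iter n F (h x) = x.
Proof.
move=> Hh Dx; have [g] := iter_Hn n Hh (leqnn n).
by rewrite subnn => -> ->.
Qed.

Context {C0 rho : R}.
Hypothesis rho01 : 0 <= rho <= 1.
Hypothesis Hn_derive : forall n h, Hn hb n h -> forall x, Delta_o x ->
  derivable h x 1 /\ `|derive1 h x| <= C0 * rho ^+ n.

Lemma C0_ge0 : 0 <= C0.
Proof.
have D_half : Delta_o (2^-1 : R) by rewrite /Delta_o /=; lra.
have [_] := Hn_derive 0 id erefl _ D_half.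
by rewrite expr0 mulr1; apply: le_trans.
Qed.

Lemma Hn_lipschitz {n h} : Hn hb n h ->
  forall x y, Delta_o x -> Delta_o y -> `|h x - h y| <= C0 * `|x - y|.
Proof.
move=> Hh; apply: lipschitz_of_derive_bounded; first exact: Delta_o_convex.
move=> c Dc; have [dh dh_le] := Hn_derive _ _ Hh c Dc.
split => //; rewrite -derive1E (le_trans dh_le) // ler_piMr ?C0_ge0 //.
by case/andP: rho01 => *; rewrite exprn_ile1.
Qed.

Lemma iter_Hn_close {m g} k {x y} : Hn hb m g -> (k <= m)%N ->
  Delta_o x -> Delta_o y ->
  [/\ Delta_o (iter k F (g x)), Delta_o (iter k F (g y)) &
      `|iter k F (g x) - iter k F (g y)| <= C0 * `|x - y|].
Proof.
move=> Hg km Dx Dy; have [g' Hg' iter_g] := iter_Hn k Hg km.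
rewrite !iter_g //; split; [exact: Hn_Delta_o Hg' _ Dx|exact: Hn_Delta_o Hg' _ Dy|].
exact: Hn_lipschitz Hg' _ _ Dx Dy.
Qed.


Context {a gamma Kxi X L : R} {xi : R -> R} {Om : set 'rV[R]_N}
  {G : R -> 'rV[R]_N -> 'rV[R]_N}.
Hypothesis a_gt0 : 0 < a.
Hypothesis a_le1 : a <= 1.
Hypothesis gamma01 : 0 < gamma < 1.
Hypothesis xi_holder : holder_on Delta a xi Kxi.
Hypothesis xi_le : forall x, Delta x -> `|xi x| <= X.
Hypothesis Om0 : Om 0.
Hypothesis G_Om : forall x y, Delta x -> Om y -> Om (G x y).
Hypothesis L_ge0 : 0 <= L.
Hypothesis G_lipschitz : forall u u' y, Delta u -> Delta u' -> Om y ->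
  enorm (G u y - G u' y) <= L * `|u - u'|.
Hypothesis Fhat_contract : forall n x y1 y2, Delta x -> Om y1 -> Om y2 ->
  dhat (Fhatn F G n (x, y1)) (Fhatn F G n (x, y2))
    <= C0 * gamma ^+ n * enorm (y1 - y2).

Let Lfib := Num.sqrt N%:R * (C0 * L * C0 / (1 - gamma)).

Lemma Lfib_ge0 : 0 <= Lfib.
Proof.
rewrite mulr_ge0 ?sqrtr_ge0 // divr_ge0 ?mulr_ge0 ?C0_ge0 // subr_ge0 ltW //.
by case/andP: gamma01.
Qed.

Lemma Fhatn_Hn_snd_Om {n h x} : Hn hb n h -> Delta_o x ->
  Om (Fhatn F G n (h x, 0)).2.
Proof.
move=> Hh Dx; apply: Fhatn_snd_Om => // k kn.
by have [Dk _ _] := iter_Hn_close k Hh (ltnW kn) Dx Dx; apply: Delta_o_Delta.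
Qed.

Lemma psin_Hn psi n h x : Hn hb n h -> Delta_o x ->
  psin F G psi n (h x) = psi (x, (Fhatn F G n (h x, 0)).2).
Proof.
move=> Hh Dx; rewrite /psin [Fhatn _ _ _ _]surjective_pairing.
by rewrite Fhatn_fst iter_HnK.
Qed.

Lemma fibre_lipschitz {m g n x y} : Hn hb m g -> (n <= m)%N ->
  Delta_o x -> Delta_o y ->
  enorm ((Fhatn F G n (g x, 0)).2 - (Fhatn F G n (g y, 0)).2)
    <= Lfib * `|x - y|.
Proof.
move=> Hg nm Dx Dy.
have close k : (k <= n)%N -> [/\ Delta (iter k F (g x)), Delta (iter k F (g y)) &
    `|iter k F (g x) - iter k F (g y)| <= C0 * `|x - y|].
  move=> kn; have [Dkx Dky ->] := iter_Hn_close k Hg (leq_trans kn nm) Dx Dy.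
  by split => //; apply: Delta_o_Delta.
apply: le_trans (Fhatn_snd_dist G_Om C0_ge0 gamma01 L_ge0 G_lipschitz
  Fhat_contract Om0 close) _.
by rewrite /Lfib !mulrA mulrAC.
Qed.

Lemma xi_Hn_holder {m g} x y : Hn hb m g -> Delta_o x -> Delta_o y ->
  `|xi (g x) - xi (g y)| <= `|Kxi| * C0 `^ a * `|x - y| `^ a.
Proof.
move=> Hg Dx Dy.
have [Dgx Dgy] := (Hn_Delta_o Hg x Dx, Hn_Delta_o Hg y Dy).
apply: le_trans (xi_holder _ _ (Delta_o_Delta Dgx) (Delta_o_Delta Dgy)) _.
apply: le_trans (ler_wpM2r (powR_ge0 _ _) (ler_norm Kxi)) _.
rewrite -mulrA ler_wpM2l // -powRM ?C0_ge0 //.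
apply: (ge0_ler_powR (ltW a_gt0)); rewrite ?nnegrE ?mulr_ge0 ?C0_ge0 //.
exact: Hn_lipschitz Hg _ _ Dx Dy.
Qed.

Lemma psin_Hn_le psi s n h x : hat_sup_le Om psi s -> Hn hb n h -> Delta_o x ->
  `|psin F G psi n (h x)| <= s.
Proof. by move=> psi_le Hh Dx; rewrite psin_Hn //; exact/psi_le/Fhatn_Hn_snd_Om. Qed.

Lemma phi_sup_le psi s n h x : hat_sup_le Om psi s -> Hn hb n h -> Delta_o x ->
  `|xi (h x) * psin F G psi n (h x)| <= X * s.
Proof.
move=> psi_le Hh Dx; rewrite normrM ler_pM ?psin_Hn_le //.
exact/xi_le/Delta_o_Delta/(Hn_Delta_o Hh).
Qed.

Lemma psin_holder_le psi t n h i x y : hat_holder_le a hb Om psi t -> 0 <= t ->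
  Hn hb n h -> Delta_o x -> Delta_o y -> x <> y ->
  `|psin F G psi n (h (hb i x)) - psin F G psi n (h (hb i y))|
    <= t * (1 + Lfib) * `|x - y| `^ a.
Proof.
move=> psi_holder t_ge0 Hh Dx Dy xy.
have [Dix Diy] := (hb_Delta_o i x Dx, hb_Delta_o i y Dy).
have Hhi := Hn_comp i Hh.
rewrite !psin_Hn //.
set Yx := (Fhatn _ _ _ _).2; set Yy := (Fhatn _ _ _ _).2.
have d_gt0 : 0 < `|x - y| by rewrite normr_gt0 subr_eq0; apply/eqP.
have d_le_da : `|x - y| <= `|x - y| `^ a.
  apply: ger1_powR a_le1; rewrite d_gt0 /= ler_norml.
  by move: Dx Dy; rewrite /Delta_o /= => /andP[? ?] /andP[? ?]; apply/andP; split; lra.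
have := psi_holder i x y Yx Yy Dx Dy
  (Fhatn_Hn_snd_Om Hh Dix) (Fhatn_Hn_snd_Om Hh Diy) (fun e => xy (congr1 fst e)).
rewrite ler_pdivrMr; last by rewrite ltr_pwDl ?powR_gt0 ?sqrtr_ge0.
move/le_trans; apply; rewrite -mulrA ler_wpM2l // mulrDl mul1r lerD2l.
apply: le_trans (fibre_lipschitz Hhi (leqnSn n) Dx Dy) _.
by rewrite ler_wpM2l // Lfib_ge0.
Qed.

Lemma phi_holder_le psi s t n h i x y :
  hat_sup_le Om psi s -> hat_holder_le a hb Om psi t -> 0 <= t ->
  Hn hb n h -> Delta_o x -> Delta_o y -> x <> y ->
  `|xi (h (hb i x)) * psin F G psi n (h (hb i x))
     - xi (h (hb i y)) * psin F G psi n (h (hb i y))| / `|x - y| `^ a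
    <= `|Kxi| * C0 `^ a * s
       + X * (t * (1 + Lfib)).
Proof.
move=> psi_le psi_holder t_ge0 Hh Dx Dy xy.
have [Dix Diy] := (hb_Delta_o i x Dx, hb_Delta_o i y Dy).
have Hhi := Hn_comp i Hh.
have d_gt0 : 0 < `|x - y| by rewrite normr_gt0 subr_eq0; apply/eqP.
rewrite ler_pdivrMr ?powR_gt0 //.
have product_diff (u v u' v' : R) : u * v - u' * v' = (u - u') * v + u' * (v - v').
  by ring.
rewrite product_diff (le_trans (ler_normD _ _)) // !normrM mulrDl.
apply: lerD; [rewrite mulrAC | rewrite -[leRHS]mulrA]; apply: ler_pM => //.
- exact: xi_Hn_holder Hhi Dx Dy.
- exact: psin_Hn_le psi_le Hh Dix.
- exact/xi_le/Delta_o_Delta/(Hn_Delta_o Hh).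
- exact: psin_holder_le.
Qed.

Lemma normD_transfer : exists2 C : R, 0 < C &
  forall psi (s t : R) n h, 0 <= s -> 0 <= t ->
    hat_sup_le Om psi s -> hat_holder_le a hb Om psi t -> Hn hb n h ->
    (normD a hb (fun x => (xi (h x) * psin F G psi n (h x))%R)
      <= (C * (s + t))%:E)%E.
Proof.
set Kc := `|Kxi| * C0 `^ a.
have X_ge0 : 0 <= X.
  by apply: le_trans (xi_le 0 _); rewrite ?normr_ge0 // /Delta /=; lra.
have Kc_ge0 : 0 <= Kc by rewrite mulr_ge0 ?powR_ge0.
exists (X + Kc + X * (1 + Lfib) + 1) => [|psi s t n h s_ge0 t_ge0 psi_le psi_holder Hh].
  by rewrite ltr_pwDr // !addr_ge0 // mulr_ge0 // addr_ge0 ?Lfib_ge0.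
apply: le_trans (normD_le a hb _ (X * s) (Kc * s + X * (t * (1 + Lfib))) _ _) _.
- by move=> x Dx; exact: phi_sup_le.
- by move=> i x y Dx Dy xy; exact: phi_holder_le.
have XMs_ge0 : 0 <= X * (1 + Lfib) * s by rewrite !mulr_ge0 // addr_ge0 ?Lfib_ge0.
have := mulr_ge0 X_ge0 t_ge0; have := mulr_ge0 Kc_ge0 t_ge0.
rewrite lee_fin; nra.
Qed.

End Transfer.

Theorem lemma6p19 (R : realType) (N : nat) (I : Type)
    (a : R) (p q : I -> R) (F : R -> R) (hb : I -> R -> R)
    (C0 rho gamma : R) (xi : R -> R) (Om : set 'rV[R]_N)
    (G : R -> 'rV[R]_N -> 'rV[R]_N) :
  standing a p q F hb C0 rho gamma xi Om G ->
  exists C : R, 0 < C /\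
    forall (psi : R * 'rV[R]_N -> R), (normDhat a hb Om psi < +oo)%E ->
    forall (n : nat) (h : R -> R), (1 <= n)%N -> Hn hb n h ->
      let phi := fun x => xi (h x) * psin F G psi n (h x) in
      (normD a hb phi < +oo)%E /\
      (normD a hb phi <= C%:E * normDhat a hb Om psi)%E.
Proof.
move=> [[/andP[a_gt0 a_le1] /andP[rho_gt0 rho_lt1] gamma01] [_ pq _ _] [_ hb_in _]
  [Hn_derive _ [_ _ _ _ [Kxi xi_holder]]] [[Om_compact Om0 G_Om G_C1a] contract]].
have hb_Delta_o i x : Delta_o x -> Delta_o (hb i x).
  have [p_ge0 [_ q_le1]] := pq i.
  by move=> /(hb_in i) [+ _]; apply: oint_sub_Delta_o p_ge0 q_le1 _.
have hbK i x : Delta_o x -> F (hb i x) = x by move=> /(hb_in i) [].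
have [X xi_le] := holder_on_Delta_bounded a_gt0 xi_holder.
have [L L_ge0 G_lipschitz] := C1a_on_lipschitz_base a_gt0 Om_compact Om0 G_C1a.
have rho01 : 0 <= rho <= 1 by rewrite !ltW.
have [C C_gt0 normD_le] := normD_transfer hb_Delta_o hbK rho01 Hn_derive
  a_gt0 a_le1 gamma01 xi_holder xi_le Om0 G_Om L_ge0 G_lipschitz contract.
exists C; split => // psi psi_fin n h _ Hh phi.
have [[i0]|noI] := pselect (inhabited I); last first.
  by rewrite normD_eqNy //; split; [exact: ltNye | exact: leNye].
have [s [t [s_ge0 t_ge0 -> psi_le psi_holder]]] :=
  normDhat_fin_decomp a hb Om psi i0 Om0 psi_fin.
have phi_le := normD_le psi s t n h s_ge0 t_ge0 psi_le psi_holder Hh.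
by split; [apply: le_lt_trans phi_le (ltry _) | rewrite -EFinM].
Qed.
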